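(* Let $k$ be a field and let $H$ be a numerical semigroup minimally generated by $n<a_2<\cdots<a_n$ with $n\ge 3$ (so the number of minimal generators equals the smallest generator $n$). Then $k[[H]]$ has minimal canonical conductor if and only if $a_n=a_{n-1}+1$.
   Context: A numerical semigroup is an additive submonoid $H\subseteq\mathbb{N}$ with $\mathbb{N}\setminus H$ finite. $k[[H]]$ is the subring of $k[[t]]$ of power series supported on $H$; it is a one-dimensional analytically unramified local domain with integral closure $\overline{R}=k[[t]]$ and it is singular when $H\ne\mathbb{N}$. A one-dimensional singular analytically unramified local domain $R$ with fraction field $Q(R)$ and canonical ideal $\omega$ has minimal canonical conductor if $b(\omega)=\mathfrak{c}(R)$, where $B(\omega)=\bigcup_{m\ge0}(\omega^m:\omega^m)$ with $\omega^m:\omega^m=\{x\in Q(R): x\omega^m\subseteq\omega^m\}$, $b(\omega)=\{x\in B(\omega): xB(\omega)\subseteq R\}$, and $\mathfrak{c}(R)=\{x\in\overline{R}: x\overline{R}\subseteq R\}$; equivalently, $B(\omega)=\overline{R}$. *)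

From HB Require Import structures.
From mathcomp Require Import all_boot all_order all_algebra.
Set Implicit Arguments. Unset Strict Implicit. Unset Printing Implicit Defensive.
Import Order.TTheory GRing.Theory Num.Theory.
Local Open Scope ring_scope.

(* A Laurent series is a coefficient function int -> k vanishing below
   some bound [lo].  Equality of series is coefficientwise; all the
   predicates below only look at coefficients. *)
Record LS (k : fieldType) := MkLS {
  lo : int;
  co : int -> k;
  co_lo : forall z : int, z < lo -> co z = 0 }.

Section LaurentOps.
Variable k : fieldType.

Definition ls_zero : LS k := @MkLS k 0 (fun _ => 0) (fun _ _ => erefl).

Definition addco (f g : LS k) (z : int) : k :=
  if z < Num.min (lo f) (lo g) then 0 else co f z + co g z.

Lemma addco_lo (f g : LS k) z : z < Num.min (lo f) (lo g) -> addco f g z = 0.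
Proof. by rewrite /addco => ->. Qed.

Definition ls_add (f g : LS k) : LS k := MkLS (@addco_lo f g).

(* Cauchy product: coefficient of t^z is sum_{lo f <= i <= z - lo g} f_i g_{z-i} *)
Definition mulco (f g : LS k) (z : int) : k :=
  if z < lo f + lo g then 0 else
  \sum_(j < (absz (z - lo f - lo g)%R).+1)
     co f (lo f + (nat_of_ord j)%:Z) * co g (z - lo f - (nat_of_ord j)%:Z).

Lemma mulco_lo (f g : LS k) z : z < lo f + lo g -> mulco f g z = 0.
Proof. by rewrite /mulco => ->. Qed.

Definition ls_mul (f g : LS k) : LS k := MkLS (@mulco_lo f g).

Definition ls_sum (s : seq (LS k * LS k)) : LS k :=
  foldr ls_add ls_zero (map (fun p => ls_mul p.1 p.2) s).

Definition ls_eq (f g : LS k) : Prop := forall z, co f z = co g z.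

End LaurentOps.

Definition frobenius (H : nat -> Prop) (F : nat) : Prop :=
  ~ H F /\ forall x : nat, (F < x)%N -> H x.

Section SemigroupRing.
Variables (k : fieldType) (H : nat -> Prop).

Definition inR (f : LS k) : Prop :=
  forall z : int, co f z <> 0 -> exists h : nat, z = h%:Z /\ H h.

(* integral closure k[[t]] *)
Definition inRbar (f : LS k) : Prop :=
  forall z : int, co f z <> 0 -> 0 <= z.

Definition in_conductor (x : LS k) : Prop :=
  inRbar x /\ forall y, inRbar y -> inR (ls_mul x y).

Variable F : nat.

(* standard canonical semigroup ideal K = { z : F - z ∉ H } *)
Definition inK (z : int) : Prop :=
  ~ exists h : nat, F%:Z - z = h%:Z /\ H h.

Definition inOmega (f : LS k) : Prop :=
  forall z : int, co f z <> 0 -> inK z.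

Definition in_prod (I J : LS k -> Prop) (z : LS k) : Prop :=
  exists s : seq (LS k * LS k),
    foldr (fun p P => (I p.1 /\ J p.2) /\ P) True s /\ ls_eq z (ls_sum s).

Fixpoint in_pow (m : nat) : LS k -> Prop :=
  match m with
  | 0 => inR
  | m'.+1 => in_prod (in_pow m') inOmega
  end.

Definition inB (x : LS k) : Prop :=
  exists m : nat, forall y, in_pow m y -> in_pow m (ls_mul x y).

Definition in_b (x : LS k) : Prop :=
  inB x /\ forall y, inB y -> inR (ls_mul x y).

End SemigroupRing.

Definition min_can_conductor (k : fieldType) (H : nat -> Prop) : Prop :=
  forall F : nat, frobenius H F ->
    forall x : LS k, in_b H F x <-> in_conductor H x.

From HB Require Import structures.
From mathcomp Require Import all_boot all_order all_algebra zify.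
Set Implicit Arguments. Unset Strict Implicit. Unset Printing Implicit Defensive.
Import Order.TTheory GRing.Theory Num.Theory.

(* Let K = {z | F - z \notin H} be the standard canonical ideal, F the Frobenius
   number.  Every power omega^m, hence (as 1 \in omega^m) every element of B(omega),
   is supported on the additive closure of H \cup K, which lies in N.  If 1 \in K,
   i.e. F - 1 \notin H, then omega^F contains every power series, so
   B(omega) = k[[t]] and b(omega) = c(R).  If F - 1 \in H, those supports avoid 1,
   so t^(F-1) B(omega) is contained in R although t^(F-1) t = t^F is not.
   When n = a_1 is also the embedding dimension, {0, a_2, ..., a_n} is the Apery set
   of n; hence F = a_n - n, and F - 1 \notin H exactly when a_n - 1 is an Apery
   element, which can only be a_(n-1). *)

Section LaurentSeries.
Local Open Scope ring_scope.
Variable k : fieldType.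
Implicit Types (f g : LS k) (z : int).

Lemma co_ls_add f g z : co (ls_add f g) z = co f z + co g z.
Proof.
rewrite /= /addco; case: ifP => //; rewrite lt_min => /andP[zf zg].
by rewrite !co_lo // addr0.
Qed.

Lemma co_ls_sum_cons (p : LS k * LS k) s z :
  co (ls_sum (p :: s)) z = co (ls_mul p.1 p.2) z + co (ls_sum s) z.
Proof. exact: co_ls_add. Qed.

Lemma monomial_lo (c : k) (b z : int) : z < b -> (if z == b then c else 0) = 0.
Proof. by move=> /lt_eqF ->. Qed.

Definition monomial (c : k) (b : int) : LS k := MkLS (@monomial_lo c b).

Definition ls_one : LS k := monomial 1 0.

Lemma co_monomial c b z : co (monomial c b) z = if z == b then c else 0.
Proof. by []. Qed.

Lemma co_mul_monomial f c b z : co (ls_mul f (monomial c b)) z = co f (z - b) * c.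
Proof.
rewrite /= /mulco /=; case: ifP => hz; first by rewrite co_lo ?mul0r //; lia.
set N := absz _; have hN : N%:Z = z - lo f - b by rewrite /N; lia.
rewrite big_ord_recr /= big1 ?add0r => [|j _].
  have -> : z - lo f - N%:Z = b by lia.
  by rewrite eqxx hN; congr (co f _ * _); lia.
rewrite /= ifN ?mulr0 //; apply/eqP; have := ltn_ord j; lia.
Qed.

Lemma drop_coef_lo f (b z : int) : z < lo f -> (if z == b then 0 else co f z) = 0.
Proof. by case: ifP => // _ /co_lo. Qed.

Definition ls_drop_coef f (b : int) : LS k := MkLS (@drop_coef_lo f b).

Lemma co_ls_drop_coef f b z : co (ls_drop_coef f b) z = if z == b then 0 else co f z.
Proof. by []. Qed.

Lemma co_mul1r f z : co (ls_mul f ls_one) z = co f z.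
Proof. by rewrite co_mul_monomial subr0 mulr1. Qed.

Lemma co_mul_neq0 f g z : co (ls_mul f g) z != 0 ->
  exists i j, [/\ z = i + j, co f i != 0 & co g j != 0].
Proof.
rewrite /= /mulco; case: ifP => _; first by rewrite eqxx.
set N := absz _ => nz_sum.
case: (pickP [pred j : 'I_N.+1 | co f (lo f + j%:Z) * co g (z - lo f - j%:Z) != 0])
  => [j /= | all0]; last first.
  by move: nz_sum; rewrite big1 ?eqxx // => j _; apply/eqP/negbFE/all0.
rewrite mulf_eq0 negb_or => /andP[nz_f nz_g].
by exists (lo f + j%:Z), (z - lo f - j%:Z); split => //; lia.
Qed.

Definition supported_on (P : int -> Prop) f : Prop := forall z, co f z <> 0 -> P z.

Lemma supported_on_monomial c b : supported_on (eq b) (monomial c b).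
Proof. by move=> z; rewrite co_monomial; case: eqP. Qed.

Lemma supported_on_mul (P Q S : int -> Prop) f g :
  supported_on P f -> supported_on Q g ->
  (forall u v, P u -> Q v -> S (u + v)) -> supported_on S (ls_mul f g).
Proof.
move=> Pf Qg PQS z /eqP /co_mul_neq0 [i [j [-> /eqP fi /eqP gj]]].
exact: PQS (Pf i fi) (Qg j gj).
Qed.

Lemma supported_on_prod (P : int -> Prop) (I J : LS k -> Prop) f :
  (forall u v, P u -> P v -> P (u + v)) ->
  (forall g, I g -> supported_on P g) -> (forall g, J g -> supported_on P g) ->
  in_prod I J f -> supported_on P f.
Proof.
move=> addP PI PJ [s [IJs eq_f]] z; rewrite eq_f; move: z.
elim: s IJs {eq_f} => [_ z /(_ erefl) // | [g h] s IHs [[Ig Jh] IJs] z].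
rewrite co_ls_sum_cons.
have [-> | gh_z _] := eqVneq (co (ls_mul g h) z) 0; first by rewrite add0r; apply: IHs.
by apply: (supported_on_mul (PI g Ig) (PJ h Jh) addP); apply/eqP.
Qed.

End LaurentSeries.

Arguments supported_on_monomial {k c b}.

Lemma frobenius_uniq (H : nat -> Prop) F F' :
  frobenius H F -> frobenius H F' -> F = F'.
Proof.
move=> [HF frobF] [HF' frobF']; case: (ltngtP F F') => // [/frobF | /frobF'] //.
Qed.

Section CanonicalIdeal.
Local Open Scope ring_scope.
Variables (k : fieldType) (H : nat -> Prop) (F : nat).

Definition inH (z : int) : Prop := exists h : nat, z = h%:Z /\ H h.

Hypotheses (H0 : H 0%N) (frobF : frobenius H F).

Lemma frobenius_gt0 : (0 < F)%N.
Proof. by case: F frobF => // [[]]. Qed.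

Lemma inK_ge0 z : inK H F z -> 0 <= z.
Proof.
move=> Kz; rewrite leNgt; apply/negP => z_lt0; apply: Kz.
by exists (F + absz z)%N; split; [lia | apply: frobF.2; lia].
Qed.

Lemma inK1E : inK H F 1 <-> ~ H F.-1.
Proof.
have F_gt0 := frobenius_gt0.
split=> [K1 HF1 | HF1 [h [Fh Hh]]]; [apply: K1; exists F.-1 | apply: HF1].
  by split=> //; lia.
by have -> : F.-1 = h by lia.
Qed.

Lemma in_pow_supported (P : int -> Prop) :
  (forall u v, P u -> P v -> P (u + v)) ->
  (forall z, inH z -> P z) -> (forall z, inK H F z -> P z) ->
  forall m (f : LS k), in_pow H F m f -> supported_on P f.
Proof.
move=> addP PH PK; elim=> [|m IHm] f /=; first by move=> Rf z /Rf /PH.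
by apply: supported_on_prod addP IHm _ => g Kg z /Kg /PK.
Qed.

Lemma ls_one_in_omega : inOmega H F (ls_one k).
Proof.
move=> z /supported_on_monomial <- [h [Fh Hh]].
by apply: frobF.1; have -> : F = h by lia.
Qed.

Lemma ls_one_in_pow m : in_pow H F m (ls_one k).
Proof.
elim: m => [|m IHm] /=; first by move=> z /supported_on_monomial <-; exists 0%N.
exists [:: (ls_one k, ls_one k)]; split; first by do !split=> //; apply: ls_one_in_omega.
by move=> z; rewrite co_ls_sum_cons co_mul1r addr0.
Qed.

Lemma inB_supported (P : int -> Prop) :
  (forall u v, P u -> P v -> P (u + v)) ->
  (forall z, inH z -> P z) -> (forall z, inK H F z -> P z) ->
  forall y : LS k, inB H F y -> supported_on P y.
Proof.
move=> addP PH PK y [m stab_m] z; rewrite -co_mul1r.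
exact: in_pow_supported addP PH PK m _ (stab_m _ (ls_one_in_pow m)) z.
Qed.

Lemma inB_inRbar (y : LS k) : inB H F y -> inRbar y.
Proof.
apply: inB_supported => [u v | _ [h [-> _]] // | ]; first exact: addr_ge0.
exact: inK_ge0.
Qed.

Section OneInK.
Hypothesis K1 : inK H F 1.

Lemma monomial_t_in_omega : inOmega H F (monomial (1 : k) 1).
Proof. by move=> z /supported_on_monomial <-. Qed.

Lemma in_pow_of_support m (f : LS k) :
  supported_on (fun z => 0 <= z <= m%:Z \/ F%:Z < z) f -> in_pow H F m f.
Proof.
elim: m f => [|m IHm] f supp_f /=.
  move=> z /supp_f z_supp; exists (absz z); split; first lia.
  by case: z_supp => [z0 | Fz]; [have -> : absz z = 0%N by lia | apply: frobF.2; lia].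
(* f = (f without its t^(m+1) term) * 1 + (c t^m) * t, with 1 and t in omega. *)
pose c := co f m.+1%:Z.
exists [:: (ls_drop_coef f m.+1%:Z, ls_one k); (monomial c m%:Z, monomial 1 1)].
split; first do !split.
- by apply: IHm => z; rewrite co_ls_drop_coef; case: eqP => // z_ne /supp_f; lia.
- exact: ls_one_in_omega.
- by apply: IHm => z /supported_on_monomial <-; lia.
- exact: monomial_t_in_omega.
- move=> z; rewrite !co_ls_sum_cons co_mul1r co_mul_monomial co_monomial.
  rewrite co_ls_drop_coef /= mulr1 addr0; case: (eqVneq z m.+1%:Z) => [-> | z_ne].
    by rewrite add0r ifT //; apply/eqP; lia.
  by rewrite ifN ?addr0 //; apply/eqP; lia.
Qed.

Lemma inRbar_inB (y : LS k) : inRbar y -> inB H F y.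
Proof.
move=> y_ge0; exists F => g g_pow; apply: in_pow_of_support.
have g_ge0 : inRbar g.
  apply: in_pow_supported g_pow => [u v | _ [h [-> _]] // | ]; first exact: addr_ge0.
  exact: inK_ge0.
by apply: (supported_on_mul y_ge0 g_ge0) => u v; lia.
Qed.

Lemma in_b_iff_conductor (x : LS k) : in_b H F x <-> in_conductor H x.
Proof.
split=> [[/inB_inRbar x_ge0 xB] | [/inRbar_inB xB xRbar]]; split=> // y.
  by move/inRbar_inB; apply: xB.
by move/inB_inRbar; apply: xRbar.
Qed.

End OneInK.

Lemma monomial_pred_frobenius_notin_conductor : ~ in_conductor H (monomial (1 : k) F.-1).
Proof.
have F_gt0 := frobenius_gt0.
move=> [_ /(_ (monomial 1 1)) t_mul]; have t_ge0 : inRbar (monomial (1 : k) 1).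
  by move=> z /supported_on_monomial <-.
have [|h [Fh Hh]] := t_mul t_ge0 F%:Z.
  by rewrite co_mul_monomial co_monomial ifT ?mulr1; [exact/eqP/oner_neq0 | apply/eqP; lia].
by apply: frobF.1; have -> : F = h by lia.
Qed.

Section PredFrobeniusInH.
Hypotheses (addH : forall x y, H x -> H y -> H (x + y)%N) (HF1 : H F.-1).

Lemma notH1 : ~ H 1%N.
Proof.
move=> H1; apply: frobF.1; elim: F => // m Hm.
by rewrite -addn1; apply: addH.
Qed.

Lemma inB_supported_neq1 (y : LS k) :
  inB H F y -> supported_on (fun z => exists h : nat, z = h%:Z /\ h <> 1%N) y.
Proof.
apply: inB_supported => [_ _ [h [-> h1]] [h' [-> h'1]] | _ [h [-> Hh]] | z Kz].
- by exists (h + h')%N; split; lia.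
- by exists h; split=> // h1; apply: notH1; rewrite -h1.
have z_ge0 := inK_ge0 Kz; exists (absz z); split=> [|z1]; first lia.
by move: Kz; rewrite (_ : z = 1); [move/inK1E | lia].
Qed.

Lemma inR_inB (x : LS k) : inR H x -> inB H F x.
Proof.
move=> Rx; exists 0%N => y Ry; apply: (supported_on_mul Rx Ry).
by move=> _ _ [h [-> Hh]] [h' [-> Hh']]; exists (h + h')%N; split; [lia | apply: addH].
Qed.

Lemma monomial_pred_frobenius_in_b : in_b H F (monomial (1 : k) F.-1).
Proof.
have F_gt0 := frobenius_gt0.
split=> [|y /inB_supported_neq1 y_supp].
  by apply: inR_inB => z /supported_on_monomial <-; exists F.-1.
apply: (supported_on_mul supported_on_monomial y_supp) => _ _ <- [[|h] [-> h1]].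
  by exists F.-1; split; [lia | ].
by exists (F.-1 + h.+1)%N; split; [lia | apply: frobF.2; lia].
Qed.

End PredFrobeniusInH.

End CanonicalIdeal.

Theorem min_can_conductorE (k : fieldType) (H : nat -> Prop) (F : nat) :
  H 0%N -> (forall x y, H x -> H y -> H (x + y)%N) -> frobenius H F ->
  min_can_conductor k H <-> ~ H F.-1.
Proof.
move=> H0 addH frobF; split=> [mcc HF1 | /(inK1E H0 frobF) K1 F' frobF'].
  apply: (monomial_pred_frobenius_notin_conductor (k := k) H0 frobF).
  by apply/(mcc F frobF); apply: monomial_pred_frobenius_in_b.
rewrite -(frobenius_uniq frobF frobF') => x.
exact: in_b_iff_conductor.
Qed.

Lemma sum_nat_delta (N i : nat) (f : nat -> nat) : (1 <= i <= N)%N ->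
  (\sum_(1 <= l < N.+1) (l == i) * f l = f i)%N.
Proof.
move=> iN; rewrite (eq_bigr (fun l => if l == i then f l else 0%N)) => [|l _].
  by rewrite -big_mkcond big_nat1_eq ltnS iN.
by case: (l == i); rewrite ?mul1n ?mul0n.
Qed.

Lemma modn_eq_addmul (x y d : nat) :
  x %% d = y %% d -> (x <= y)%N -> exists q, y = (x + q * d)%N.
Proof.
move=> xy_mod xy; have /dvdnP[q yx] : (d %| y - x)%N by rewrite -eqn_mod_dvd // xy_mod.
by exists q; lia.
Qed.

Lemma modn_eq_close (x y d : nat) :
  x %% d = y %% d -> (x <= y < x + d)%N -> x = y.
Proof. by move=> /modn_eq_addmul xy_mod /andP[/xy_mod [[|q] ->]]; lia. Qed.

Section MaximalEmbeddingDimension.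
Variables (n : nat) (H : nat -> Prop) (a : nat -> nat).
Hypotheses (n_gt1 : (1 < n)%N)
  (H_gen : forall x, H x <-> exists c : nat -> nat, x = (\sum_(1 <= i < n.+1) c i * a i)%N)
  (gen_min : forall i, (1 <= i <= n)%N ->
     ~ exists c : nat -> nat, c i = 0%N /\ a i = (\sum_(1 <= j < n.+1) c j * a j)%N)
  (a1 : a 1%N = n)
  (a_incr : forall i j, (1 <= i)%N -> (i < j)%N -> (j <= n)%N -> (a i < a j)%N).

Lemma mem0 : H 0%N.
Proof. by apply/H_gen; exists (fun _ => 0%N); rewrite big1. Qed.

Lemma memD x y : H x -> H y -> H (x + y)%N.
Proof.
move=> /H_gen[c ->] /H_gen[c' ->]; apply/H_gen; exists (fun l => c l + c' l)%N.
by rewrite -big_split; apply: eq_bigr => l _; rewrite mulnDl.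
Qed.

Lemma sum_gen_addn_mul i q : (1 <= i <= n)%N ->
  (\sum_(1 <= l < n.+1) ((l == i) + (l == 1%N) * q) * a l = a i + q * n)%N.
Proof.
move=> i_n; under eq_bigr do rewrite mulnDl -mulnA.
by rewrite big_split /= sum_nat_delta // (sum_nat_delta (fun l => q * a l)) ?a1 //; lia.
Qed.

Lemma gen_addn_mul_mem i q : (1 <= i <= n)%N -> H (a i + q * n)%N.
Proof.
move=> i_n; apply/H_gen; exists (fun l => (l == i) + (l == 1%N) * q)%N.
by rewrite sum_gen_addn_mul.
Qed.

Lemma gen_subn_notin j : (2 <= j <= n)%N -> ~ H (a j - n)%N.
Proof.
move=> j_n /H_gen[c def_c]; apply: (gen_min (i := j)); first lia.
have a1_lt : (n < a j)%N by rewrite -a1 a_incr //; lia.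
have cj0 : c j = 0%N.
  have : (c j * a j <= a j - n)%N.
    by rewrite def_c (big_rem j) ?mem_index_iota /= ?leq_addr //; lia.
  by case: (c j) => // cj; nia.
exists (fun l => c l + (l == 1%N))%N; split; first by rewrite cj0; case: eqP => //; lia.
under eq_bigr do rewrite mulnDl.
by rewrite big_split /= -def_c (sum_nat_delta a) ?a1; lia.
Qed.

Lemma gen_modn_inj i j : (1 <= i)%N -> (i < j)%N -> (j <= n)%N -> a i %% n <> a j %% n.
Proof.
move=> i_ge1 ij j_n /modn_eq_addmul /(_ (ltnW (a_incr i_ge1 ij j_n))) [q aj].
apply: (gen_min (i := j)); first lia.
exists (fun l => (l == i) + (l == 1%N) * q)%N; split; first by do 2!case: eqP => //; lia.
by rewrite sum_gen_addn_mul ?aj //; lia.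
Qed.

Lemma gen_modn_surj x : exists2 i, (1 <= i <= n)%N & a i %% n = x %% n.
Proof.
have n_gt0 := ltnW n_gt1.
pose r (i : 'I_n) : 'I_n := Ordinal (ltn_pmod (a i.+1) n_gt0).
have r_inj : injective r.
  move=> i j /(congr1 val) /= r_ij; apply/val_inj.
  case: (ltngtP i j) => // [ij | ji]; exfalso.
    exact: (gen_modn_inj (i := i.+1) (j := j.+1) _ _ (ltn_ord j) r_ij).
  exact: (gen_modn_inj (i := j.+1) (j := i.+1) _ _ (ltn_ord i) (esym r_ij)).
have [r' rK r'K] := injF_bij r_inj.
set x' : 'I_n := Ordinal (ltn_pmod x n_gt0).
by exists (r' x').+1; [have := ltn_ord (r' x'); lia | exact: (congr1 val (r'K x'))].
Qed.

Lemma mem_of_gen_modn x i :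
  (1 <= i <= n)%N -> a i %% n = x %% n -> (a i <= x)%N -> H x.
Proof. by move=> i_n /modn_eq_addmul ax /ax [q ->]; apply: gen_addn_mul_mem. Qed.

Lemma gen_leq_last i : (1 <= i <= n)%N -> (a i <= a n)%N.
Proof.
by case: (ltngtP i n) => [i_lt|n_lt|-> //] i_n; [apply: ltnW; apply: a_incr; lia | lia].
Qed.

Lemma frobenius_gen : frobenius H (a n - n).
Proof.
split=> [|x x_gt]; first by apply: gen_subn_notin; lia.
have [i i_n ax] := gen_modn_surj x; apply: (mem_of_gen_modn i_n ax).
have ai_an := gen_leq_last i_n.
case: (leqP (a i) x) => // x_lt; have [q def_ai] := modn_eq_addmul (esym ax) (ltnW x_lt).
by case: q def_ai => [|q] def_ai; nia.
Qed.

Lemma pred_frobenius_gen_notin : (2 < n)%N ->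
  ~ H (a n - n).-1 <-> a n = (a n.-1).+1.
Proof.
move=> n_gt2; have an1_lt : (a n.-1 < a n)%N by apply: a_incr; lia.
have n_lt : (a 1%N < a n.-1)%N by apply: a_incr; lia.
split=> [notH | a_n]; last first.
  by rewrite a_n (_ : _.-1 = a n.-1 - n)%N; [apply: gen_subn_notin | ]; lia.
have [i i_n ai] := gen_modn_surj (a n).-1.
have ai_an := gen_leq_last i_n.
case: (leqP (a i) (a n - n).-1) => [ai_le | ai_gt].
  case: notH; apply: (mem_of_gen_modn i_n _ ai_le).
  by rewrite ai (_ : (a n).-1 = (a n - n).-1 + n)%N ?modnDr //; lia.
have def_ai : a i = (a n).-1.
  case: (leqP (a i) (a n).-1) => [ai_le | ai_gt'].
    by apply: modn_eq_close ai _; lia.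
  have an_mod : (a n).-1 %% n = a n %% n by rewrite -ai (_ : a i = a n) //; lia.
  by have := modn_eq_close an_mod; lia.
clear ai; case: (ltngtP i n.-1) => [i_lt | i_gt | i_eq].
- by have := a_incr (i := i) (j := n.-1); lia.
- by rewrite (_ : i = n) in def_ai; lia.
- by rewrite i_eq in def_ai; lia.
Qed.

End MaximalEmbeddingDimension.

Theorem corollary3p2 (k : fieldType) (n : nat) (H : nat -> Prop) (a : nat -> nat) :
  (3 <= n)%N ->
  (* H is a numerical semigroup: cofinite *)
  (exists N : nat, forall x : nat, (N <= x)%N -> H x) ->
  (* H is generated by a_1, ..., a_n *)
  (forall x : nat, H x <-> exists c : nat -> nat, x = (\sum_(1 <= i < n.+1) c i * a i)%N) ->
  (* the generators are minimal: no a_i is a combination of the others *)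
  (forall i : nat, (1 <= i <= n)%N ->
     ~ exists c : nat -> nat, c i = 0%N /\ a i = (\sum_(1 <= j < n.+1) c j * a j)%N) ->
  (* n = a_1 < a_2 < ... < a_n *)
  a 1%N = n ->
  (forall i j : nat, (1 <= i)%N -> (i < j)%N -> (j <= n)%N -> (a i < a j)%N) ->
  (min_can_conductor k H <-> a n = (a n.-1).+1).
Proof.
move=> n_ge3 _ H_gen gen_min a1 a_incr.
have n_gt1 : (1 < n)%N by lia.
rewrite (min_can_conductorE k (mem0 H_gen) (memD H_gen)
          (frobenius_gen n_gt1 H_gen gen_min a1 a_incr)).
exact: pred_frobenius_gen_notin.
Qed.
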